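(* Let $Z=C_0\cup C_1$ be a Tychonoff space such that (1) $C_0\cap C_1=\emptyset$; (2) $C_0$ is an open $F_\sigma$ subset of $Z$; (3) both $C_0$ and $C_1$ (with the subspace topologies) are $\Delta$-spaces. Then $Z$ is a $\Delta$-space.
   Context: A topological space $X$ is a $\Delta$-space if for every decreasing sequence $\{D_n:n\in\omega\}$ of subsets of $X$ with $\bigcap_n D_n=\emptyset$ there is a decreasing sequence $\{V_n:n\in\omega\}$ of open subsets of $X$ with $D_n\subseteq V_n$ for all $n$ and $\bigcap_n V_n=\emptyset$. *)

From HB Require Import structures.
From mathcomp Require Import all_boot all_order all_algebra.
From mathcomp Require Import all_classical all_reals all_analysis.
Set Implicit Arguments. Unset Strict Implicit. Unset Printing Implicit Defensive.
Local Open Scope classical_set_scope.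

Definition decr_sets {T : Type} (D : nat -> set T) : Prop :=
  forall n, D n.+1 `<=` D n.

Definition Delta_space (T : topologicalType) : Prop :=
  forall D : nat -> set T, decr_sets D -> \bigcap_n D n = set0 ->
  exists V : nat -> set T, [/\ (forall n, open (V n)), decr_sets V,
    (forall n, D n `<=` V n) & \bigcap_n V n = set0].

(* Subsets of A are subsets of T contained in A; open subsets of A (subspace
   topology) are the traces U `&` A of open subsets U of T. *)
Definition Delta_subspace (T : topologicalType) (A : set T) : Prop :=
  forall D : nat -> set T, (forall n, D n `<=` A) -> decr_sets D ->
  \bigcap_n D n = set0 ->
  exists V : nat -> set T,
    [/\ (forall n, exists U, open U /\ V n = U `&` A), decr_sets V,
      (forall n, D n `<=` V n) & \bigcap_n V n = set0].

Definition F_sigma (T : topologicalType) (A : set T) : Prop :=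
  exists F : nat -> set T, (forall n, closed (F n)) /\ A = \bigcup_n F n.

(* Tychonoff = T_1 (here: Hausdorff) and completely regular. *)
Definition tychonoff_space (T : topologicalType) : Prop :=
  hausdorff_space T /\ completely_regular_space T.

From mathcomp Require Import all_boot all_order all_algebra.
From mathcomp Require Import all_classical all_reals all_analysis.
Set Implicit Arguments. Unset Strict Implicit. Unset Printing Implicit Defensive.
Local Open Scope classical_set_scope.

(* Let (D n) be decreasing with empty intersection.  Applying the
   Delta property of C0 and of C1 to the traces D n `&` C0 and D n `&` C1 gives
   relatively open covers; since C0 is open, the first one consists of open
   sets W0 n of Z inside C0, and for C1 the relatively open sets U n `&` C1 can
   be replaced by the open sets U 0 `&` ... `&` U n, which decrease.  Writing
   C0 as an increasing union of closed sets G n, the sets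
       V n := W0 n `|` (W1 n `\` G n)
   are open, decrease and cover D n.  A point of C0 lies in some G k, so from k
   on it can only be in the W0 n, whose intersection is empty; a point of C1
   never meets W0 n, so it would lie in every W1 n `&` C1, which is impossible. *)

Lemma decr_sets_le (T : Type) (D : nat -> set T) :
  decr_sets D -> forall m n, (m <= n)%N -> D n `<=` D m.
Proof.
move=> dD m n /subnK <-; elim: (n - m)%N => [//|k IH].
by rewrite addSn => x /dD /IH.
Qed.

Lemma decr_sets_trace (T : Type) (D : nat -> set T) (A : set T) :
  decr_sets D -> \bigcap_n D n = set0 ->
  decr_sets (fun n => D n `&` A) /\ \bigcap_n (D n `&` A) = set0.
Proof.
move=> dD iD; split; first by move=> n x [/dD].
by apply/seteqP; split=> // x hx; rewrite -iD => n _; case: (hx n I).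
Qed.

Section Prefixes.
Variable T : topologicalType.

Definition prefix_cap (U : nat -> set T) (n : nat) : set T :=
  \bigcap_(i in `I_n.+1) U i.
Definition prefix_cup (F : nat -> set T) (n : nat) : set T :=
  \bigcup_(i in `I_n.+1) F i.

Lemma prefix_cup_closed (F : nat -> set T) n :
  (forall i, closed (F i)) -> closed (prefix_cup F n).
Proof. by move=> cF; apply: closed_bigcup => //; exact: finite_II. Qed.

Lemma prefix_cap_open (U : nat -> set T) n :
  (forall i, open (U i)) -> open (prefix_cap U n).
Proof.
move=> oU; rewrite /prefix_cap -[X in open X]setCK openC setC_bigcap.
by apply: prefix_cup_closed => i; rewrite closedC.
Qed.

Lemma prefix_cap_decr (U : nat -> set T) : decr_sets (prefix_cap U).
Proof. by move=> n x hx i /= lti; apply: hx => /=; rewrite ltnS ltnW. Qed.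

Lemma prefix_cup_le (F : nat -> set T) m n :
  (m <= n)%N -> prefix_cup F m `<=` prefix_cup F n.
Proof.
by move=> lemn x [i /= lti Fx]; exists i => //=; rewrite (leq_trans lti).
Qed.

Lemma sub_prefix_cup (F : nat -> set T) n : F n `<=` prefix_cup F n.
Proof. by move=> x Fx; exists n => /=. Qed.

Lemma prefix_cup_sub (F : nat -> set T) n :
  prefix_cup F n `<=` \bigcup_i F i.
Proof. by move=> x [i _ Fx]; exists i. Qed.

End Prefixes.

(* The relatively open V n = U n `&` A are
   replaced by prefix_cap U n, whose trace on A is again V n since V decreases. *)
Lemma Delta_subspace_lift (T : topologicalType) (A : set T) :
  Delta_subspace A -> forall D : nat -> set T, decr_sets D ->
  \bigcap_n D n = set0 ->
  exists W : nat -> set T, [/\ (forall n, open (W n)), decr_sets W,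
    (forall n, D n `&` A `<=` W n) & \bigcap_n (W n `&` A) = set0].
Proof.
move=> DA D dD iD; have [dDA iDA] := decr_sets_trace A dD iD.
have [V [oV dV sV iV]] := DA _ (fun n x => @proj2 _ _) dDA iDA.
have [U hU] := choice oV.
have trace n : prefix_cap U n `&` A = V n.
  apply/seteqP; split=> [x [hx Ax]|x Vx].
    by rewrite (hU n).2; split=> //; apply: hx => /=.
  split; last by move: Vx; rewrite (hU n).2 => -[].
  move=> i /= lti; have : V i x by exact: decr_sets_le Vx.
  by rewrite (hU i).2 => -[].
exists (prefix_cap U); split.
- by move=> n; apply: prefix_cap_open => i; case: (hU i).
- exact: prefix_cap_decr.
- by move=> n x /sV; rewrite -trace => -[].
- by rewrite -iV; apply: eq_bigcapr => n _; exact: trace.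
Qed.

Lemma Delta_subspace_open_lift (T : topologicalType) (A : set T) :
  open A -> Delta_subspace A -> forall D : nat -> set T, decr_sets D ->
  \bigcap_n D n = set0 ->
  exists W : nat -> set T, [/\ (forall n, open (W n)), decr_sets W,
    (forall n, W n `<=` A), (forall n, D n `&` A `<=` W n)
    & \bigcap_n W n = set0].
Proof.
move=> oA DA D dD iD; have [W [oW dW sW iW]] := Delta_subspace_lift DA dD iD.
exists (fun n => W n `&` A); split => //.
- by move=> n; apply: openI.
- by move=> n x [/dW].
- by move=> n x hx; split; [exact: sW | case: hx].
Qed.

Section Gluing.
Variables (Z : topologicalType) (C0 C1 : set Z).
Hypotheses (C01 : C0 `|` C1 = setT) (C0C1 : C0 `&` C1 = set0).

Lemma in_C0_or_C1 x : C0 x \/ C1 x.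
Proof. by have : (C0 `|` C1) x by rewrite C01. Qed.

Lemma not_C0_C1 x : C0 x -> C1 x -> False.
Proof. by move=> h0 h1; have : (C0 `&` C1) x by []; rewrite C0C1. Qed.

Variables (G W0 W1 D : nat -> set Z).
Hypotheses (cG : forall n, closed (G n))
  (G_le : forall m n, (m <= n)%N -> G m `<=` G n)
  (GC0 : forall n, G n `<=` C0) (C0G : C0 `<=` \bigcup_n G n).
Hypotheses (oW0 : forall n, open (W0 n)) (dW0 : decr_sets W0)
  (W0C0 : forall n, W0 n `<=` C0) (sW0 : forall n, D n `&` C0 `<=` W0 n)
  (iW0 : \bigcap_n W0 n = set0).
Hypotheses (oW1 : forall n, open (W1 n)) (dW1 : decr_sets W1)
  (sW1 : forall n, D n `&` C1 `<=` W1 n)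
  (iW1 : \bigcap_n (W1 n `&` C1) = set0).

Definition glued (n : nat) : set Z := W0 n `|` (W1 n `\` G n).

Lemma glued_open n : open (glued n).
Proof. by apply: openU => //; apply: openI => //; exact: closed_openC. Qed.

Lemma glued_decr : decr_sets glued.
Proof.
move=> n x [/dW0 h|[/dW1 h1 h2]]; [by left | right; split=> // Gx].
by apply: h2; apply: G_le Gx.
Qed.

Lemma sub_glued n : D n `<=` glued n.
Proof.
move=> x Dx; case: (in_C0_or_C1 x) => h; first by left; exact: sW0.
by right; split; [exact: sW1 | move=> /GC0 /not_C0_C1; apply].
Qed.

(* A point of C0 lies in some G k, hence in no W1 n `\` G n for n >= k; a
   point of C1 lies in no W0 n. *)
Lemma glued_bigcap : \bigcap_n glued n = set0.
Proof.
apply/seteqP; split=> // x hx; case: (in_C0_or_C1 x) => [/C0G [k _ Gkx]|h].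
- rewrite -iW0 => n _; have lek : (k <= maxn n k)%N by exact: leq_maxr.
  case: (hx (maxn n k) I) => [h|[_ /(_ (G_le lek Gkx)) //]].
  exact: (decr_sets_le dW0 (leq_maxl n k) h).
- rewrite -iW1 => n _; split=> //.
  by case: (hx n I) => [/W0C0 /not_C0_C1 /(_ h) | []].
Qed.

End Gluing.

Theorem theorem3p8 (Z : topologicalType) (C0 C1 : set Z) :
  tychonoff_space Z ->
  C0 `|` C1 = setT ->
  C0 `&` C1 = set0 ->
  open C0 -> F_sigma C0 ->
  Delta_subspace C0 -> Delta_subspace C1 ->
  Delta_space Z.
Proof.
move=> _ C01 C0C1 oC0 [F [cF eF]] DC0 DC1 D dD iD.
have [W0 [oW0 dW0 W0C0 sW0 iW0]] := Delta_subspace_open_lift oC0 DC0 dD iD.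
have [W1 [oW1 dW1 sW1 iW1]] := Delta_subspace_lift DC1 dD iD.
have cG n : closed (prefix_cup F n) := prefix_cup_closed cF.
have G_le m n : (m <= n)%N -> prefix_cup F m `<=` prefix_cup F n :=
  @prefix_cup_le _ F m n.
have GC0 n : prefix_cup F n `<=` C0 by rewrite eF; exact: prefix_cup_sub.
have C0G : C0 `<=` \bigcup_n prefix_cup F n.
  by rewrite eF => x [n _ /sub_prefix_cup Fx]; exists n.
exists (glued (prefix_cup F) W0 W1); split.
- exact: glued_open.
- exact: glued_decr.
- exact: (sub_glued C01 C0C1).
- exact: (glued_bigcap C01 C0C1).
Qed.
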